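(* Let $X$ be a topological space in which every open set is a union of countably many clopen sets. The following are equivalent: (1) $X$ is a $\overline{\mathrm{QN}}$ space; (2) $X$ is a QN space; (3) every sequence of Borel real-valued functions on $X$ converging pointwise to $0$ converges to $0$ quasi-normally; (4) every sequence of Borel real-valued functions on $X$ converging pointwise to a function $f$ converges quasi-normally to $f$.
   Context: Functions $f_n:X\to\mathbb{R}$ converge quasi-normally to $f$ if there are positive reals $\epsilon_n\to0$ such that for each $x\in X$, $|f_n(x)-f(x)|<\epsilon_n$ for all but finitely many $n$. $X$ is a QN space if every sequence of continuous real-valued functions on $X$ converging pointwise to $0$ converges to $0$ quasi-normally. $X$ is a $\overline{\mathrm{QN}}$ space if whenever a sequence of continuous real-valued functions on $X$ converges pointwise to a function $f:X\to\mathbb{R}$ (not assumed continuous), it converges to $f$ quasi-normally. *)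

From Stdlib Require Import Reals.
Open Scope R_scope.

Record topology (X : Type) := {
  is_open : (X -> Prop) -> Prop;
  open_full : is_open (fun _ => True);
  open_empty : is_open (fun _ => False);
  open_inter : forall U V, is_open U -> is_open V -> is_open (fun x => U x /\ V x);
  open_union : forall (I : Type) (F : I -> X -> Prop),
      (forall i, is_open (F i)) -> is_open (fun x => exists i, F i x)
}.
Arguments is_open {X} _ _.

Definition clopen {X : Type} (T : topology X) (U : X -> Prop) : Prop :=
  is_open T U /\ is_open T (fun x => ~ U x).

Definition open_countable_union_clopen {X : Type} (T : topology X) : Prop :=
  forall U, is_open T U ->
    exists C : nat -> X -> Prop,
      (forall n, clopen T (C n)) /\ (forall x, U x <-> exists n, C n x).

Definition continuous_fun {X : Type} (T : topology X) (f : X -> R) : Prop :=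
  forall V : R -> Prop, open_set V -> is_open T (fun x => V (f x)).

Definition borel_set {X : Type} (T : topology X) (A : X -> Prop) : Prop :=
  forall S : (X -> Prop) -> Prop,
    (forall U, is_open T U -> S U) ->
    (forall B, S B -> S (fun x => ~ B x)) ->
    (forall Bn : nat -> X -> Prop, (forall n, S (Bn n)) -> S (fun x => exists n, Bn n x)) ->
    S A.

Definition borel_fun {X : Type} (T : topology X) (f : X -> R) : Prop :=
  forall V : R -> Prop, open_set V -> borel_set T (fun x => V (f x)).

Definition pointwise_cv {X : Type} (fn : nat -> X -> R) (f : X -> R) : Prop :=
  forall x, Un_cv (fun n => fn n x) (f x).

Definition quasi_normal_cv {X : Type} (fn : nat -> X -> R) (f : X -> R) : Prop :=
  exists eps : nat -> R,
    (forall n, 0 < eps n) /\ Un_cv eps 0 /\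
    forall x, exists N : nat, forall n, (N <= n)%nat -> Rabs (fn n x - f x) < eps n.

Definition QN_space {X : Type} (T : topology X) : Prop :=
  forall fn : nat -> X -> R, (forall n, continuous_fun T (fn n)) ->
    pointwise_cv fn (fun _ => 0) -> quasi_normal_cv fn (fun _ => 0).

Definition QNbar_space {X : Type} (T : topology X) : Prop :=
  forall (fn : nat -> X -> R) (f : X -> R), (forall n, continuous_fun T (fn n)) ->
    pointwise_cv fn f -> quasi_normal_cv fn f.

Definition borel_QN {X : Type} (T : topology X) : Prop :=
  forall fn : nat -> X -> R, (forall n, borel_fun T (fn n)) ->
    pointwise_cv fn (fun _ => 0) -> quasi_normal_cv fn (fun _ => 0).

Definition borel_QNbar {X : Type} (T : topology X) : Prop :=
  forall (fn : nat -> X -> R) (f : X -> R), (forall n, borel_fun T (fn n)) ->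
    pointwise_cv fn f -> quasi_normal_cv fn f.

From Stdlib Require Import Reals Lra Lia.
From Stdlib Require Import Classical ClassicalEpsilon FunctionalExtensionality PropExtensionality.
From Stdlib Require Import ZArith.
From Stdlib Require Cantor.
Open Scope R_scope.

(* Continuous functions are Borel, so the only real implication is (2) => (4).
   Call a set a clopen limit if it is the pointwise limit of a sequence of clopen sets.
   Under the hypothesis on X every open set is a clopen limit, complements are free, and
   QN is exactly what is needed to close clopen limits under countable unions: a sequence
   of clopen approximations can be synchronised by a single threshold function, which is
   extracted from the quasi-normal convergence to 0 of the continuous functions
   x |-> max {1/(k+1) | k <= i, x in W k i}.  Hence every Borel set is a clopen limit.
   Given Borel f_n -> f, the events "f_i is not 1/(k+1)-stable after time i" are clopen
   limits that every point eventually escapes; the same threshold argument bounds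
   |f_i x - f x| by 1/(k+1) for i beyond a threshold t k that does not depend on x, and
   such a threshold is equivalent to quasi-normal convergence. *)

Lemma inv_INR_S_pos (k : nat) : 0 < / INR (S k).
Proof. apply Rinv_0_lt_compat, lt_0_INR; lia. Qed.

Lemma inv_INR_S_le (k m : nat) : (k <= m)%nat -> / INR (S m) <= / INR (S k).
Proof. intro H. apply Rinv_le_contravar; [apply lt_0_INR; lia | apply le_INR; lia]. Qed.

Lemma eventually_forall_le (P : nat -> nat -> Prop) :
  (forall k, exists M, forall i, (M <= i)%nat -> P k i) ->
  forall K, exists I, forall k, (k <= K)%nat -> forall i, (I <= i)%nat -> P k i.
Proof.
  intros H K; induction K as [|K [I HI]].
  - destruct (H 0%nat) as [M HM]. exists M. intros k Hk i Hi.
    replace k with 0%nat by lia; auto.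
  - destruct (H (S K)) as [M HM]. exists (Nat.max I M). intros k Hk i Hi.
    destruct (Nat.eq_dec k (S K)) as [->|Hne]; [apply HM | apply HI]; lia.
Qed.

Fixpoint max_upto (a : nat -> R) (n : nat) : R :=
  match n with O => a O | S n' => Rmax (max_upto a n') (a (S n')) end.

Lemma max_upto_ge (a : nat -> R) (n k : nat) : (k <= n)%nat -> a k <= max_upto a n.
Proof.
  induction n; intro H; simpl.
  - replace k with 0%nat by lia; lra.
  - destruct (Nat.eq_dec k (S n)) as [->|Hne]; [apply Rmax_r|].
    eapply Rle_trans; [apply IHn; lia | apply Rmax_l].
Qed.

Lemma max_upto_le (a : nat -> R) (n : nat) (b : R) :
  (forall k, (k <= n)%nat -> a k <= b) -> max_upto a n <= b.
Proof.
  induction n; intro H; simpl; [apply H; lia|].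
  apply Rmax_lub; [apply IHn; intros; apply H | apply H]; lia.
Qed.

Section Clopen.
Context {X : Type} (T : topology X).

Lemma open_ext (U V : X -> Prop) : is_open T U -> (forall x, U x <-> V x) -> is_open T V.
Proof.
  intros H E. replace V with U; auto.
  extensionality x; apply propositional_extensionality; auto.
Qed.

Lemma open_or (U V : X -> Prop) :
  is_open T U -> is_open T V -> is_open T (fun x => U x \/ V x).
Proof.
  intros HU HV.
  pose (F := fun b : bool => if b then U else V).
  apply (open_ext _ _ (open_union X T bool F (fun b => if b as b return is_open T (F b)
                                                     then HU else HV))).
  intros x; split.
  - intros [[|] Hb]; auto.
  - intros [Hx|Hx]; [exists true | exists false]; exact Hx.
Qed.

Lemma clopen_ext (U V : X -> Prop) : clopen T U -> (forall x, U x <-> V x) -> clopen T V.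
Proof.
  intros [H1 H2] E; split; [exact (open_ext _ _ H1 E)|].
  apply (open_ext _ _ H2). intro x; rewrite (E x); tauto.
Qed.

Lemma clopen_compl (C : X -> Prop) : clopen T C -> clopen T (fun x => ~ C x).
Proof.
  intros [H1 H2]; split; auto.
  apply (open_ext _ _ H1). intro x; split; [tauto | apply NNPP].
Qed.

Lemma clopen_or (U V : X -> Prop) :
  clopen T U -> clopen T V -> clopen T (fun x => U x \/ V x).
Proof.
  intros [H1 H2] [H3 H4]; split; [apply open_or; auto|].
  apply (open_ext _ _ (open_inter X T _ _ H2 H4)). intro x; tauto.
Qed.

Lemma clopen_and (U V : X -> Prop) :
  clopen T U -> clopen T V -> clopen T (fun x => U x /\ V x).
Proof.
  intros HU HV.
  apply (clopen_ext _ _ (clopen_compl _ (clopen_or _ _ (clopen_compl _ HU) (clopen_compl _ HV)))).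
  intro x; destruct (classic (U x)); destruct (classic (V x)); tauto.
Qed.

Lemma clopen_xor (U V : X -> Prop) :
  clopen T U -> clopen T V -> clopen T (fun x => ~ (U x <-> V x)).
Proof.
  intros HU HV.
  apply (clopen_ext _ _ (clopen_or _ _ (clopen_and _ _ HU (clopen_compl _ HV))
                                       (clopen_and _ _ (clopen_compl _ HU) HV))).
  intro x; destruct (classic (U x)); destruct (classic (V x)); tauto.
Qed.

Lemma clopen_finite_union (P : nat -> X -> Prop) :
  (forall k, clopen T (P k)) -> forall j, clopen T (fun x => exists k, (k <= j)%nat /\ P k x).
Proof.
  intros HP j; induction j.
  - apply (clopen_ext _ _ (HP 0%nat)). intro x; split.
    + intro; exists 0%nat; auto.
    + intros [k [Hk H]]. replace k with 0%nat in H by lia. exact H.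
  - apply (clopen_ext _ _ (clopen_or _ _ IHj (HP (S j)))). intro x; split.
    + intros [[k [Hk H]]|H]; [exists k | exists (S j)]; split; auto.
    + intros [k [Hk H]]. destruct (Nat.eq_dec k (S j)) as [->|Hne]; [right; auto|].
      left; exists k; split; [lia | auto].
Qed.

Definition locally_constant (f : X -> R) : Prop :=
  forall x, exists U, is_open T U /\ U x /\ forall z, U z -> f z = f x.

Lemma locally_constant_continuous (f : X -> R) : locally_constant f -> continuous_fun T f.
Proof.
  intros H V _.
  assert (Us : forall y, {U | is_open T U /\ U y /\ forall z, U z -> f z = f y}).
  { intro y. apply constructive_indefinite_description, H. }
  pose (F := fun p : {y : X | V (f y)} => proj1_sig (Us (proj1_sig p))).
  apply (open_ext _ _ (open_union X T _ F (fun p => proj1 (proj2_sig (Us (proj1_sig p)))))).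
  intro x; split.
  - intros [[y Hy] Hx]. unfold F in Hx; simpl in Hx.
    rewrite (proj2 (proj2 (proj2_sig (Us y))) x Hx); auto.
  - intro Hx. exists (exist _ x Hx). exact (proj1 (proj2 (proj2_sig (Us x)))).
Qed.

Lemma locally_constant_comb (f g : X -> R) (h : R -> R -> R) :
  locally_constant f -> locally_constant g -> locally_constant (fun x => h (f x) (g x)).
Proof.
  intros Hf Hg x. destruct (Hf x) as [U [HU [HUx HUe]]]. destruct (Hg x) as [V [HV [HVx HVe]]].
  exists (fun z => U z /\ V z). split; [apply open_inter; auto|]. split; [auto|].
  intros z [Hz1 Hz2]. rewrite (HUe z Hz1), (HVe z Hz2); auto.
Qed.

Lemma locally_constant_indicator (C : X -> Prop) (a b : R) : clopen T C ->
  locally_constant (fun x => if excluded_middle_informative (C x) then a else b).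
Proof.
  intros [H1 H2] x. destruct (excluded_middle_informative (C x)) as [Hc|Hc];
    [exists C | exists (fun z => ~ C z)]; repeat split; auto;
    intros z Hz; destruct (excluded_middle_informative (C z)); tauto.
Qed.

Lemma continuous_borel_fun (f : X -> R) : continuous_fun T f -> borel_fun T f.
Proof. intros Hf V HV S Hopen _ _. apply Hopen, Hf, HV. Qed.

End Clopen.

Section QN_threshold.
Context {X : Type} (T : topology X) (hQN : QN_space T).

Section Escape.
Variable W : nat -> nat -> X -> Prop.
Hypothesis W_clopen : forall k i, clopen T (W k i).
Hypothesis W_escape : forall x k, exists M, forall i, (M <= i)%nat -> ~ W k i x.

Let weight (i k : nat) (x : X) : R :=
  if excluded_middle_informative (W k i x) then / INR (S k) else 0.

Let escape_gauge (i : nat) (x : X) : R := max_upto (fun k => weight i k x) i.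

Lemma escape_gauge_continuous (i : nat) : continuous_fun T (escape_gauge i).
Proof.
  apply locally_constant_continuous. unfold escape_gauge.
  generalize i at 2; intro n; induction n; simpl.
  - apply locally_constant_indicator; auto.
  - apply (locally_constant_comb T _ _ Rmax IHn), locally_constant_indicator; auto.
Qed.

Lemma escape_gauge_ge (i k : nat) (x : X) :
  (k <= i)%nat -> W k i x -> / INR (S k) <= escape_gauge i x.
Proof.
  intros Hk Hw. eapply Rle_trans; [|apply (max_upto_ge (fun k => weight i k x)); exact Hk].
  unfold weight. destruct (excluded_middle_informative (W k i x)); [lra | contradiction].
Qed.

Lemma escape_gauge_cv : pointwise_cv escape_gauge (fun _ => 0).
Proof.
  intros x eps Heps. destruct (archimed_cor1 eps Heps) as [N [HN HN0]].
  destruct (eventually_forall_le (fun k i => ~ W k i x) (fun k => W_escape x k) N) as [I HI].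
  exists I. intros i Hi. unfold Rdist.
  (* below the level N every W k i is escaped, above it the weights are at most 1/(N+1) *)
  assert (Hub : escape_gauge i x <= / INR (S N)).
  { apply max_upto_le. intros k Hk. unfold weight.
    destruct (excluded_middle_informative (W k i x)) as [Hw|Hw].
    - destruct (Compare_dec.le_lt_dec k N) as [Hkn|Hkn].
      + exfalso; apply (HI k Hkn i); auto; lia.
      + apply inv_INR_S_le; lia.
    - left; apply inv_INR_S_pos. }
  assert (Hlb : 0 <= escape_gauge i x).
  { eapply Rle_trans; [|apply (max_upto_ge (fun k => weight i k x) i 0%nat); lia].
    unfold weight. destruct (excluded_middle_informative _); [left; apply inv_INR_S_pos | lra]. }
  assert (/ INR (S N) <= / INR N) by (apply Rinv_le_contravar; [apply lt_0_INR | apply le_INR]; lia).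
  rewrite Rminus_0_r, Rabs_right by lra. lra.
Qed.

Lemma QN_escape_threshold :
  exists t : nat -> nat, forall x, exists K, forall k, (K <= k)%nat ->
    forall i, (t k <= i)%nat -> ~ W k i x.
Proof.
  destruct (hQN escape_gauge escape_gauge_continuous escape_gauge_cv)
    as [eps [_ [Heps_cv Heps_x]]].
  assert (Hsmall : forall k, exists I, forall i, (I <= i)%nat -> eps i < / INR (S k)).
  { intro k. destruct (Heps_cv (/ INR (S k)) (inv_INR_S_pos k)) as [I HI].
    exists I. intros i Hi. specialize (HI i Hi). unfold Rdist in HI.
    rewrite Rminus_0_r in HI. apply Rabs_def2 in HI. lra. }
  destruct (choice _ Hsmall) as [t0 Ht0].
  exists (fun k => Nat.max k (t0 k)).
  intros x. destruct (Heps_x x) as [N HN]. exists N. intros k Hk i Hi Hw.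
  assert (H1 := HN i ltac:(lia)). rewrite Rminus_0_r in H1. apply Rabs_def2 in H1.
  assert (H2 := Ht0 k i ltac:(lia)).
  assert (H3 := escape_gauge_ge i k x ltac:(lia) Hw). lra.
Qed.

End Escape.

Lemma QN_stabilization_threshold (C : nat -> nat -> X -> Prop) (A : nat -> X -> Prop) :
  (forall k j, clopen T (C k j)) ->
  (forall x k, exists J, forall j, (J <= j)%nat -> (C k j x <-> A k x)) ->
  exists t : nat -> nat, forall x, exists K, forall k, (K <= k)%nat ->
    forall j, (t k <= j)%nat -> (C k j x <-> A k x).
Proof.
  intros HC HA.
  destruct (QN_escape_threshold (fun k i x => ~ (C k i x <-> C k (S i) x))) as [t Ht].
  - intros k i. apply clopen_xor; auto.
  - intros x k. destruct (HA x k) as [J HJ]. exists J. intros i Hi Hn. apply Hn.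
    rewrite (HJ i Hi), (HJ (S i) ltac:(lia)). tauto.
  - exists t. intros x. destruct (Ht x) as [K HK]. exists K. intros k Hk j Hj.
    assert (Hconst : forall d, C k (t k + d)%nat x <-> C k (t k) x).
    { induction d; [rewrite Nat.add_0_r; tauto|].
      assert (Hstep := NNPP _ (HK k Hk (t k + d)%nat ltac:(lia))).
      replace (t k + S d)%nat with (S (t k + d)) by lia. rewrite <- Hstep. exact IHd. }
    destruct (HA x k) as [J HJ].
    replace j with (t k + (j - t k))%nat by lia. rewrite Hconst.
    rewrite <- (HJ (t k + (J + j))%nat ltac:(lia)). rewrite Hconst. tauto.
Qed.

End QN_threshold.

Section ClopenLimit.
Context {X : Type} (T : topology X).

Definition clopen_limit (A : X -> Prop) : Prop :=
  exists C : nat -> X -> Prop, (forall j, clopen T (C j)) /\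
    forall x, exists J, forall j, (J <= j)%nat -> (C j x <-> A x).

Lemma clopen_limit_compl (A : X -> Prop) : clopen_limit A -> clopen_limit (fun x => ~ A x).
Proof.
  intros [C [HC HA]]. exists (fun j x => ~ C j x). split; [intro j; apply clopen_compl; auto|].
  intro x. destruct (HA x) as [J HJ]. exists J. intros j Hj. rewrite (HJ j Hj). tauto.
Qed.

Lemma clopen_limit_and (A B : X -> Prop) :
  clopen_limit A -> clopen_limit B -> clopen_limit (fun x => A x /\ B x).
Proof.
  intros [C [HC HA]] [D [HD HB]]. exists (fun j x => C j x /\ D j x).
  split; [intro j; apply clopen_and; auto|].
  intro x. destruct (HA x) as [J HJ]. destruct (HB x) as [J' HJ'].
  exists (Nat.max J J'). intros j Hj. rewrite HJ, HJ' by lia. tauto.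
Qed.

Lemma clopen_limit_open (hX : open_countable_union_clopen T) (U : X -> Prop) :
  is_open T U -> clopen_limit U.
Proof.
  intro HU. destruct (hX U HU) as [C [HC HUC]].
  exists (fun j x => exists k, (k <= j)%nat /\ C k x).
  split; [apply clopen_finite_union; auto|].
  intro x. destruct (classic (U x)) as [Hx|Hx].
  - destruct (proj1 (HUC x) Hx) as [n Hn]. exists n. intros j Hj.
    split; [auto | intros _; exists n; auto].
  - exists 0%nat. intros j _. split; [|tauto]. intros [k [_ Hk]]. apply HUC. exists k; auto.
Qed.

Lemma clopen_limit_seq_uniform (hQN : QN_space T) (A : nat -> X -> Prop) :
  (forall k, clopen_limit (A k)) ->
  exists G : nat -> nat -> X -> Prop, (forall k j, clopen T (G k j)) /\
    forall x, exists N, forall k j, (N <= k \/ N <= j)%nat -> (G k j x <-> A k x).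
Proof.
  intro HA. destruct (choice _ HA) as [F HF].
  destruct (QN_stabilization_threshold T hQN F A (fun k => proj1 (HF k))
              (fun x k => proj2 (HF k) x)) as [t Ht].
  exists (fun k j => F k (Nat.max j (t k))). split; [intros k j; apply HF|].
  intro x. destruct (Ht x) as [K HK].
  destruct (eventually_forall_le (fun k j => F k j x <-> A k x) (fun k => proj2 (HF k) x) K)
    as [I HI].
  exists (Nat.max K I). intros k j Hkj.
  destruct (Compare_dec.le_lt_dec K k) as [Hk|Hk].
  - apply HK; lia.
  - apply HI; lia.
Qed.

Lemma clopen_limit_union (hQN : QN_space T) (A : nat -> X -> Prop) :
  (forall k, clopen_limit (A k)) -> clopen_limit (fun x => exists k, A k x).
Proof.
  intro HA. destruct (clopen_limit_seq_uniform hQN A HA) as [G [HG HGx]].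
  exists (fun j x => exists k, (k <= j)%nat /\ G k j x).
  split; [intro j; apply (clopen_finite_union T (fun k => G k j)); auto|].
  intro x. destruct (HGx x) as [N HN]. destruct (classic (exists k, A k x)) as [[k Hk]|Hn].
  - exists (Nat.max k N). intros j Hj. split; [intros _; exists k; auto|].
    intros _. exists k. split; [lia|]. apply (HN k j); [lia | auto].
  - exists N. intros j Hj. split; [|tauto].
    intros [k [_ Hk]]. exists k. apply (HN k j); [lia | auto].
Qed.

Lemma clopen_limit_borel (hX : open_countable_union_clopen T) (hQN : QN_space T)
  (A : X -> Prop) : borel_set T A -> clopen_limit A.
Proof.
  intro H. apply H; [apply clopen_limit_open, hX | apply clopen_limit_compl |
                     apply clopen_limit_union, hQN].
Qed.

Lemma QN_escape_threshold_limit (hQN : QN_space T) (V : nat -> nat -> X -> Prop) :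
  (forall k i, clopen_limit (V k i)) ->
  (forall x k, exists M, forall i, (M <= i)%nat -> ~ V k i x) ->
  exists t : nat -> nat, forall x, exists K, forall k, (K <= k)%nat ->
    forall i, (t k <= i)%nat -> ~ V k i x.
Proof.
  intros HV Hesc.
  (* enumerate the double sequence through the Cantor pairing, whose code dominates both indices *)
  destruct (clopen_limit_seq_uniform hQN
              (fun p => V (fst (Cantor.of_nat p)) (snd (Cantor.of_nat p))))
    as [G [HG HGx]]; [intro p; apply HV|].
  pose (D := fun k i => G (Cantor.to_nat (k, i)) (Cantor.to_nat (k, i))).
  assert (HD : forall x, exists J, forall k i, (J <= k \/ J <= i)%nat -> (D k i x <-> V k i x)).
  { intro x. destruct (HGx x) as [J HJ]. exists J. intros k i Hki.
    assert (Hle := Cantor.to_nat_non_decreasing k i). unfold D.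
    rewrite (HJ (Cantor.to_nat (k, i)) (Cantor.to_nat (k, i)) ltac:(lia)), Cantor.cancel_of_to.
    tauto. }
  destruct (QN_escape_threshold T hQN D) as [t Ht].
  - intros k i; apply HG.
  - intros x k. destruct (HD x) as [J HJ]. destruct (Hesc x k) as [M HM].
    exists (Nat.max J M). intros i Hi. rewrite HJ by lia. apply HM; lia.
  - exists t. intro x. destruct (Ht x) as [K HK]. destruct (HD x) as [J HJ].
    exists (Nat.max K J). intros k Hk i Hi. rewrite <- HJ by lia. apply HK; lia.
Qed.

End ClopenLimit.

(* [majorant_level t i] is the largest k with [majorant t k <= i], or 0 if there is none. *)
Fixpoint majorant (t : nat -> nat) (k : nat) : nat :=
  match k with O => t O | S k' => (majorant t k' + t (S k') + 1)%nat end.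

Lemma majorant_ge (t : nat -> nat) (k : nat) : (t k <= majorant t k)%nat.
Proof. destruct k; simpl; lia. Qed.

Lemma majorant_mono (t : nat -> nat) (a b : nat) :
  (a <= b)%nat -> (majorant t a <= majorant t b)%nat.
Proof. induction 1; simpl; lia. Qed.

Fixpoint majorant_level (t : nat -> nat) (i : nat) : nat :=
  match i with
  | O => O
  | S i' => if Nat.leb (majorant t (S (majorant_level t i'))) (S i')
            then S (majorant_level t i') else majorant_level t i'
  end.

Lemma majorant_level_spec (t : nat -> nat) (i : nat) :
  (majorant_level t i = O \/ (majorant t (majorant_level t i) <= i)%nat) /\
  (i < majorant t (S (majorant_level t i)))%nat.
Proof.
  induction i as [|i [H1 H2]]; [simpl; lia|].
  cbn [majorant_level]. destruct (Nat.leb (majorant t (S (majorant_level t i))) (S i)) eqn:E.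
  - apply Nat.leb_le in E. split; [right; auto|].
    change (majorant t (S (S (majorant_level t i))))
      with (majorant t (S (majorant_level t i)) + t (S (S (majorant_level t i))) + 1)%nat.
    lia.
  - apply Nat.leb_gt in E. lia.
Qed.

Lemma majorant_level_ge (t : nat -> nat) (K i : nat) :
  (majorant t K <= i)%nat -> (K <= majorant_level t i)%nat.
Proof.
  intro H. destruct (majorant_level_spec t i) as [_ H2].
  destruct (Compare_dec.le_lt_dec K (majorant_level t i)) as [|Hl]; auto.
  assert (majorant t (S (majorant_level t i)) <= majorant t K)%nat
    by (apply majorant_mono; lia).
  lia.
Qed.

Lemma quasi_normal_cv_of_threshold {X : Type} (fn : nat -> X -> R) (f : X -> R)
  (t : nat -> nat) :
  (forall x, exists K, forall k, (K <= k)%nat ->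
     forall i, (t k <= i)%nat -> Rabs (fn i x - f x) < / INR (S k)) ->
  quasi_normal_cv fn f.
Proof.
  intro H. exists (fun i => / INR (S (Nat.pred (majorant_level t i)))).
  split; [|split]; [intro; apply inv_INR_S_pos | |].
  - intros e He. destruct (archimed_cor1 e He) as [N [HN HN0]].
    exists (majorant t (S N)). intros i Hi. unfold Rdist. rewrite Rminus_0_r.
    assert (Hk := majorant_level_ge t (S N) i Hi).
    assert (Hpos := inv_INR_S_pos (Nat.pred (majorant_level t i))).
    assert (/ INR (S (Nat.pred (majorant_level t i))) <= / INR N)
      by (apply Rinv_le_contravar; [apply lt_0_INR | apply le_INR]; lia).
    rewrite Rabs_right by lra. lra.
  - intro x. destruct (H x) as [K HK]. exists (majorant t (S K)). intros i Hi.
    assert (Hk := majorant_level_ge t (S K) i Hi).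
    destruct (majorant_level_spec t i) as [[H0|H1] _]; [lia|].
    apply HK; [lia|].
    assert (Hge := majorant_ge t (Nat.pred (majorant_level t i))).
    assert (majorant t (Nat.pred (majorant_level t i)) <= majorant t (majorant_level t i))%nat
      by (apply majorant_mono; lia).
    lia.
Qed.

(* The grid c Z written as {(n - m) c | n, m : nat}, so that unions over it are over nat. *)
Lemma grid_point_below (y c : R) : 0 < c ->
  exists n m : nat, (INR n - INR m) * c <= y < (INR n - INR m) * c + c.
Proof.
  intro Hc. destruct (base_Int_part (y / c)) as [H1 H2].
  set (z := Int_part (y / c)) in *.
  exists (Z.to_nat z), (Z.to_nat (- z)).
  assert (Hz : INR (Z.to_nat z) - INR (Z.to_nat (- z)) = IZR z).
  { destruct z as [|p|p]; simpl; [lra| |];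
      rewrite INR_IZR_INZ, positive_nat_Z; simpl; [lra|].
    rewrite <- Pos2Z.opp_pos, opp_IZR. lra. }
  rewrite Hz. assert (Hy : y = y / c * c) by (field; lra).
  split; nra.
Qed.

Section BorelQNbar.
Context {X : Type} (T : topology X).
Hypothesis hX : open_countable_union_clopen T.
Hypothesis hQN : QN_space T.
Variables (fn : nat -> X -> R) (f : X -> R).
Hypothesis fn_borel : forall n, borel_fun T (fn n).
Hypothesis fn_cv : pointwise_cv fn f.

Let scale (k : nat) : R := / INR (S k) / 5.

Lemma scale_pos (k : nat) : 0 < scale k.
Proof. unfold scale. assert (H := inv_INR_S_pos k). lra. Qed.

Let grid_close (k i j : nat) (x : X) : Prop :=
  exists n m : nat, Rabs (fn i x - (INR n - INR m) * scale k) < 2 * scale k /\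
                    Rabs (fn j x - (INR n - INR m) * scale k) < 2 * scale k.

Let unstable (k i : nat) (x : X) : Prop := exists j, ~ grid_close k i (i + j) x.

Lemma unstable_clopen_limit (k i : nat) : clopen_limit T (unstable k i).
Proof.
  assert (Hball : forall i z, clopen_limit T (fun x => Rabs (fn i x - z) < 2 * scale k)).
  { intros i' z. assert (Hr : 0 < 2 * scale k) by (assert (H := scale_pos k); lra).
    apply clopen_limit_borel; auto.
    exact (fn_borel i' (disc z (mkposreal _ Hr)) (disc_P1 _ _)). }
  apply clopen_limit_union; auto. intro j. apply clopen_limit_compl.
  apply clopen_limit_union; auto. intro n. apply clopen_limit_union; auto. intro m.
  apply clopen_limit_and; apply Hball.
Qed.

Lemma unstable_escaped (x : X) (k : nat) :
  exists M, forall i, (M <= i)%nat -> ~ unstable k i x.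
Proof.
  assert (Hc := scale_pos k).
  destruct (fn_cv x (scale k / 2)) as [M HM]; [lra|].
  exists M. intros i Hi [j Hj]. apply Hj.
  destruct (grid_point_below (fn i x) (scale k) Hc) as [n [m Hnm]].
  exists n, m.
  assert (H1 := HM i ltac:(lia)). assert (H2 := HM (i + j)%nat ltac:(lia)).
  unfold Rdist in H1, H2. apply Rabs_def2 in H1. apply Rabs_def2 in H2.
  split; apply Rabs_def1; lra.
Qed.

Lemma stable_close_to_limit (x : X) (k i : nat) :
  ~ unstable k i x -> Rabs (fn i x - f x) < / INR (S k).
Proof.
  intro Hst. assert (Hc := scale_pos k).
  destruct (fn_cv x (scale k)) as [M HM]; [exact Hc|].
  assert (Hclose : grid_close k i (i + M) x) by (apply NNPP; intro Hn; apply Hst; exists M; auto).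
  destruct Hclose as [n [m [A B]]].
  assert (H3 := HM (i + M)%nat ltac:(lia)). unfold Rdist in H3.
  apply Rabs_def2 in A. apply Rabs_def2 in B. apply Rabs_def2 in H3.
  replace (/ INR (S k)) with (5 * scale k) by (unfold scale; lra).
  apply Rabs_def1; lra.
Qed.

Lemma QN_borel_QNbar_cv : quasi_normal_cv fn f.
Proof.
  destruct (QN_escape_threshold_limit T hQN unstable unstable_clopen_limit unstable_escaped)
    as [t Ht].
  apply (quasi_normal_cv_of_threshold fn f t).
  intro x. destruct (Ht x) as [K HK]. exists K. intros k Hk i Hi.
  apply stable_close_to_limit, HK; auto.
Qed.

End BorelQNbar.

Theorem mainTheorem11 (X : Type) (T : topology X)
  (hX : open_countable_union_clopen T) :
  (QNbar_space T <-> QN_space T) /\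
  (QN_space T <-> borel_QN T) /\
  (borel_QN T <-> borel_QNbar T).
Proof.
  assert (QN_borel_QNbar : QN_space T -> borel_QNbar T)
    by (intros hQN fn f Hb Hcv; exact (QN_borel_QNbar_cv T hX hQN fn f Hb Hcv)).
  assert (QNbar_QN : QNbar_space T -> QN_space T) by (intros H fn Hc; apply H; auto).
  assert (borel_QNbar_QNbar : borel_QNbar T -> QNbar_space T)
    by (intros H fn f Hc; apply H; intro n; apply continuous_borel_fun, Hc).
  assert (borel_QN_QN : borel_QN T -> QN_space T)
    by (intros H fn Hc; apply H; intro n; apply continuous_borel_fun, Hc).
  assert (borel_QNbar_borel_QN : borel_QNbar T -> borel_QN T) by (intros H fn Hb; apply H; auto).
  tauto.
Qed.
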